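(* Let a 3D consistent six-tuple of quad-equations with the tetrahedron property, composed of equations $H_k^\epsilon$ (rhombic and/or trapezoidal) and/or $Q_k^\epsilon$ for a fixed $k\in\{1,2,3\}$, be given on an elementary cube of $\mathbb Z^3$ (any of the nine systems described in the context, including those obtained by color inversion and rotation), with the Lagrangians $L,\Lambda,\bar\Lambda$ chosen consistently as in the context. Then, for every solution $X,X_i,X_{ij},X_{123}$ of the six-tuple, $$\Delta_1\mathcal L(X,X_2,X_3;\alpha_2,\alpha_3)+\Delta_2\mathcal L(X,X_3,X_1;\alpha_3,\alpha_1)+\Delta_3\mathcal L(X,X_1,X_2;\alpha_1,\alpha_2)=0,$$ where $\Delta_i$ acts on vertex functions by $\Delta_i F(X)=F(X_i)-F(X)$ (i.e., it shifts all arguments $X_\bullet\mapsto X_{\bullet i}$, with $X_{ii}$ not occurring), and $\mathcal L$ is the discrete Lagrangian two-form defined in the context. Consequently the action $S=\sum_{\sigma\in\Sigma}\mathcal L(\sigma)$ on quad-surfaces $\Sigma\subset\mathbb Z^m$ is invariant under elementary 3D flips on solutions.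
   Context: Fix constants $\epsilon,\delta\in\mathbb C$ and $k\in\{1,2,3\}$. Polynomials: $Q_1^\epsilon=\alpha_1(x_1x_2+x_3x_4)-\alpha_2(x_1x_4+x_2x_3)-(\alpha_1-\alpha_2)(x_1x_3+x_2x_4)+\epsilon^2\alpha_1\alpha_2(\alpha_1-\alpha_2)$; $Q_2^\epsilon=\alpha_1(x_1x_2+x_3x_4)-\alpha_2(x_1x_4+x_2x_3)-(\alpha_1-\alpha_2)(x_1x_3+x_2x_4)+\alpha_1\alpha_2(\alpha_1-\alpha_2)+\epsilon\alpha_1\alpha_2(\alpha_1-\alpha_2)(x_1+x_2+x_3+x_4)-\epsilon^2\alpha_1\alpha_2(\alpha_1-\alpha_2)(\alpha_1^2-\alpha_1\alpha_2+\alpha_2^2)$; $Q_3^\epsilon=\sinh(2\alpha_1)(x_1x_2+x_3x_4)-\sinh(2\alpha_2)(x_1x_4+x_2x_3)-\sinh(2(\alpha_1-\alpha_2))(x_1x_3+x_2x_4)-4\delta^2\epsilon^2\sinh(2\alpha_1)\sinh(2\alpha_2)\sinh(2(\alpha_1-\alpha_2))$; $H_1^\epsilon=(x_1-x_3)(x_2-x_4)+(\alpha_2-\alpha_1)(1-\epsilon^2x_2x_4)$; $H_2^\epsilon=(x_1-x_3)(x_2-x_4)+(\alpha_2-\alpha_1)(x_1+x_2+x_3+x_4)+\alpha_2^2-\alpha_1^2-\frac{\epsilon}{2}(\alpha_2-\alpha_1)(2x_2+\alpha_1+\alpha_2)(2x_4+\alpha_1+\alpha_2)-\frac{\epsilon}{2}(\alpha_2-\alpha_1)^3$;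 $H_3^\epsilon=e^{2\alpha_1}(x_1x_2+x_3x_4)-e^{2\alpha_2}(x_1x_4+x_2x_3)+(e^{4\alpha_1}-e^{4\alpha_2})\big(\delta^2+\epsilon^2x_2x_4e^{-2(\alpha_1+\alpha_2)}\big)$. Rhombic $H_k^\epsilon$: $H_k^\epsilon(x_1,x_2,x_3,x_4)=0$ on a square with cyclic vertices $x_1,x_2,x_3,x_4$, edges $x_1x_2,x_3x_4$ with $\alpha_1$, $x_2x_3,x_4x_1$ with $\alpha_2$; $x_1,x_3$ black, $x_2,x_4$ white. Trapezoidal $H_k^\epsilon$: $H_k^\epsilon(x_1,x_3,x_2,x_4;\alpha_2-\alpha_1,\alpha_2)=0$ on a square with cyclic vertices $x_1,x_2,x_3,x_4$, black edge $x_1x_2$ and white edge $x_3x_4$ with $\alpha_1$, edges $x_2x_3,x_4x_1$ with $\alpha_2$. For $Q_k^\epsilon$ all vertices are black (or all white). Six-tuples: on the cube with vertices $x,x_i,x_{ij},x_{123}$ ($i,j\in\{1,2,3\}$), edges in direction $i$ carry $\alpha_i$; quad-equations $A(x,x_1,x_2,x_{12})=0$, $\bar A(x_3,x_{13},x_{23},x_{123})=0$, $B(x,x_2,x_3,x_{23})=0$, $\bar B(x_1,x_{12},x_{13},x_{123})=0$, $C(x,x_1,x_3,x_{13})=0$, $\bar C(x_2,x_{12},x_{23},x_{123})=0$ on the faces; 3D consistency means that for arbitrary $x,x_1,x_2,x_3$ the three values of $x_{123}$ from $\bar A,\bar B,\bar C$ coincide; the tetrahedron property means that solutions also satisfy quad-equations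 $K(x,x_{12},x_{13},x_{23})=0$ and $\bar K(x_1,x_2,x_3,x_{123})=0$ (diagonals $x_ix_j$ resp. $x_{ik}x_{jk}$ carry $\alpha_i-\alpha_j$). The nine systems (up to Möbius transformations of fields, color inversion, and rotations) are, for $k=1,2,3$: (a) all six faces rhombic $H_k^\epsilon$, tetrahedron equations $Q_k^\epsilon$ (e.g. $x,x_{ij}$ black, $x_i,x_{123}$ white); (b) two pairs of opposite faces trapezoidal $H_k^\epsilon$, one pair $Q_k^\epsilon$, tetrahedron equations $H_k^\epsilon$ (e.g. $x,x_1,x_2,x_{12}$ black, $x_3,x_{13},x_{23},x_{123}$ white); (c) two pairs of opposite faces trapezoidal $H_k^\epsilon$, one pair rhombic $H_k^\epsilon$, tetrahedron equations $H_k^\epsilon$ (e.g. $x,x_{12},x_3,x_{123}$ black, $x_1,x_2,x_{13},x_{23}$ white). The polynomials are normalized so that on each edge of the cube the biquadratics (biquadratic $Q^{i,j}=Q_{x_k}Q_{x_\ell}-QQ_{x_kx_\ell}$, $\{k,\ell\}$ complementary to $\{i,j\}$) coming from the two adjacent faces coincide up to the factor $-1$; consequently each edge and each face diagonal carries a well-defined Lagrangian. Lagrangians: in uniformizing variables $x=f(X)$ (black: $x=X$ for $k=1$; $x=X(1+\epsilon X)$, or $X$ if $\epsilon=0$, for $k=2$; $x=2\delta\epsilon\cosh 2X$, or $e^{2X}$ if $\epsilon=0$, for $k=3$; white: $x=X$ for $k=1,2$, $x=e^{2X}$ for $k=3$), functions $L(X,Y;\alpha)$ ($X$ black, $Y$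 white), symmetric $\Lambda(X,X';a)$ (black-black), symmetric $\bar\Lambda(Y,Y';a)$ (white-white), chosen so that for each single quad-equation on its solutions: rhombic: $L(X_1,X_2;\alpha_1)+L(X_3,X_4;\alpha_1)-L(X_1,X_4;\alpha_2)-L(X_3,X_2;\alpha_2)-\Lambda(X_1,X_3;\alpha_1-\alpha_2)-\bar\Lambda(X_2,X_4;\alpha_1-\alpha_2)=0$; trapezoidal: $\Lambda(X_1,X_2;\alpha_1)+\bar\Lambda(X_3,X_4;\alpha_1)-L(X_1,X_4;\alpha_2)-L(X_2,X_3;\alpha_2)+L(X_1,X_3;\alpha_2-\alpha_1)+L(X_2,X_4;\alpha_2-\alpha_1)=0$; $Q_k^\epsilon$: the rhombic relation with all Lagrangians equal to $\Lambda$ (resp. $\bar\Lambda$ on all-white squares). Two-form on an oriented square with $X$ (at $n$), $X_1$ (at $n+e_i$), $X_2$ (at $n+e_j$), parameters $\alpha_1$ (direction $i$), $\alpha_2$ (direction $j$), according to the colors: (a) $X$ black, $X_1,X_2$ white: $\mathcal L=L(X,X_1;\alpha_1)-L(X,X_2;\alpha_2)-\bar\Lambda(X_1,X_2;\alpha_1-\alpha_2)$; (b) $X$ white, $X_1,X_2$ black: $\mathcal L=L(X_1,X;\alpha_1)-L(X_2,X;\alpha_2)-\Lambda(X_1,X_2;\alpha_1-\alpha_2)$; (c) $X,X_2$ black, $X_1$ white: $\mathcal L=L(X,X_1;\alpha_1)-\Lambda(X,X_2;\alpha_2)-L(X_2,X_1;\alpha_1-\alpha_2)$; (d) $X,X_2$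 white, $X_1$ black: $\mathcal L=L(X_1,X;\alpha_1)-\bar\Lambda(X,X_2;\alpha_2)-L(X_1,X_2;\alpha_1-\alpha_2)$; (e) $X,X_1$ black, $X_2$ white: $\mathcal L=\Lambda(X,X_1;\alpha_1)-L(X,X_2;\alpha_2)+L(X_1,X_2;\alpha_2-\alpha_1)$; (f) $X,X_1$ white, $X_2$ black: $\mathcal L=\bar\Lambda(X,X_1;\alpha_1)-L(X_2,X;\alpha_2)+L(X_2,X_1;\alpha_2-\alpha_1)$; (g) all black: $\mathcal L=\Lambda(X,X_1;\alpha_1)-\Lambda(X,X_2;\alpha_2)-\Lambda(X_1,X_2;\alpha_1-\alpha_2)$; (h) all white: $\mathcal L=\bar\Lambda(X,X_1;\alpha_1)-\bar\Lambda(X,X_2;\alpha_2)-\bar\Lambda(X_1,X_2;\alpha_1-\alpha_2)$. *)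

From Stdlib Require Import Reals.
Open Scope R_scope.

Record CC : Type := mkC { Re : R; Im : R }.

Definition Cr (r : R) : CC := mkC r 0.
Definition C0 : CC := Cr 0.
Definition C1 : CC := Cr 1.
Definition Cadd (z w : CC) : CC := mkC (Re z + Re w) (Im z + Im w).
Definition Copp (z : CC) : CC := mkC (- Re z) (- Im z).
Definition Csub (z w : CC) : CC := Cadd z (Copp w).
Definition Cmul (z w : CC) : CC :=
  mkC (Re z * Re w - Im z * Im w) (Re z * Im w + Im z * Re w).
Definition Cexp (z : CC) : CC := mkC (exp (Re z) * cos (Im z)) (exp (Re z) * sin (Im z)).
Definition Ccosh (z : CC) : CC := Cmul (Cr (/2)) (Cadd (Cexp z) (Cexp (Copp z))).
Definition Csinh (z : CC) : CC := Cmul (Cr (/2)) (Csub (Cexp z) (Cexp (Copp z))).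

Definition C_eq_dec (z w : CC) : {z = w} + {z <> w}.
Proof.
  destruct z as [a b], w as [c d].
  destruct (Req_EM_T a c) as [H1|H1]; [destruct (Req_EM_T b d) as [H2|H2]|].
  - left; subst; reflexivity.
  - right; intro H; inversion H; contradiction.
  - right; intro H; inversion H; contradiction.
Defined.

Declare Scope C_scope.
Delimit Scope C_scope with Cx.
Bind Scope C_scope with CC.
Notation "x + y" := (Cadd x y) : C_scope.
Notation "x - y" := (Csub x y) : C_scope.
Notation "- x" := (Copp x) : C_scope.
Notation "x * y" := (Cmul x y) : C_scope.
Notation "0" := C0 : C_scope.
Notation "1" := C1 : C_scope.
Notation "2" := (Cr 2) : C_scope.
Notation "4" := (Cr 4) : C_scope.
Notation "x ^2" := (Cmul x x) (at level 2) : C_scope.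

Local Open Scope C_scope.

Inductive kind : Type := K1 | K2 | K3.

Definition Qpoly (k : kind) (e d : CC) (x1 x2 x3 x4 a1 a2 : CC) : CC :=
  match k with
  | K1 => a1 * (x1 * x2 + x3 * x4) - a2 * (x1 * x4 + x2 * x3)
          - (a1 - a2) * (x1 * x3 + x2 * x4) + e^2 * a1 * a2 * (a1 - a2)
  | K2 => a1 * (x1 * x2 + x3 * x4) - a2 * (x1 * x4 + x2 * x3)
          - (a1 - a2) * (x1 * x3 + x2 * x4) + a1 * a2 * (a1 - a2)
          + e * a1 * a2 * (a1 - a2) * (x1 + x2 + x3 + x4)
          - e^2 * a1 * a2 * (a1 - a2) * (a1^2 - a1 * a2 + a2^2)
  | K3 => Csinh (2 * a1) * (x1 * x2 + x3 * x4) - Csinh (2 * a2) * (x1 * x4 + x2 * x3)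
          - Csinh (2 * (a1 - a2)) * (x1 * x3 + x2 * x4)
          - 4 * d^2 * e^2 * Csinh (2 * a1) * Csinh (2 * a2) * Csinh (2 * (a1 - a2))
  end.

(** [Hpoly k e d x1 x2 x3 x4 a1 a2] is H_k^e (x1, x3 black; x2, x4 white). *)
Definition Hpoly (k : kind) (e d : CC) (x1 x2 x3 x4 a1 a2 : CC) : CC :=
  match k with
  | K1 => (x1 - x3) * (x2 - x4) + (a2 - a1) * (1 - e^2 * x2 * x4)
  | K2 => (x1 - x3) * (x2 - x4) + (a2 - a1) * (x1 + x2 + x3 + x4) + a2^2 - a1^2
          - e * Cr (/2) * (a2 - a1) * (2 * x2 + a1 + a2) * (2 * x4 + a1 + a2)
          - e * Cr (/2) * ((a2 - a1) * (a2 - a1) * (a2 - a1))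
  | K3 => Cexp (2 * a1) * (x1 * x2 + x3 * x4) - Cexp (2 * a2) * (x1 * x4 + x2 * x3)
          + (Cexp (4 * a1) - Cexp (4 * a2))
            * (d^2 + e^2 * x2 * x4 * Cexp (- (2 * (a1 + a2))))
  end.

Definition unif_black (k : kind) (e d : CC) (X : CC) : CC :=
  match k with
  | K1 => X
  | K2 => X * (1 + e * X)
  | K3 => if C_eq_dec e 0 then Cexp (2 * X) else 2 * d * e * Ccosh (2 * X)
  end.

Definition unif_white (k : kind) (X : CC) : CC :=
  match k with
  | K1 | K2 => X
  | K3 => Cexp (2 * X)
  end.

(** colour [true] = black, [false] = white *)
Definition unif (k : kind) (e d : CC) (black : bool) (X : CC) : CC :=
  if black then unif_black k e d X else unif_white k X.

(** The square has cyclic vertices p0 p1 p2 p3 (values x0 .. x3, colours c0 .. c3);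
    the edges p0p1, p2p3 carry b1 and the edges p1p2, p3p0 carry b2.
    - all black: Q_k^eps; all white: Q_k^0;
    - opposite vertices of equal colour: rhombic H_k^eps, i.e.
      H(x1,x2,x3,x4;al1,al2) with x1 black, edge x1x2 carrying al1;
    - one black edge and one white edge: trapezoidal H_k^eps, i.e.
      H(x1,x3,x2,x4; al2-al1, al2) where x1x2 is the black edge carrying al1,
      x2x3 carries al2 and x3x4 is the white edge.
    Squares with three vertices of one colour never occur for the admissible
    colourings below; the (irrelevant) value 0 is used for them. *)
Definition quadPoly (k : kind) (e d : CC) (c0 c1 c2 c3 : bool)
    (x0 x1 x2 x3 b1 b2 : CC) : CC :=
  match c0, c1, c2, c3 with
  | true, true, true, true => Qpoly k e d x0 x1 x2 x3 b1 b2
  | false, false, false, false => Qpoly k 0 d x0 x1 x2 x3 b1 b2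
  | true, false, true, false => Hpoly k e d x0 x1 x2 x3 b1 b2
  | false, true, false, true => Hpoly k e d x1 x2 x3 x0 b2 b1
  (* trapezoidal, black edge p0p1 *)
  | true, true, false, false => Hpoly k e d x0 x2 x1 x3 (b2 - b1) b2
  (* trapezoidal, black edge p2p3 (as square p3 p2 p1 p0) *)
  | false, false, true, true => Hpoly k e d x3 x1 x2 x0 (b2 - b1) b2
  (* trapezoidal, black edge p1p2 (as square p1 p2 p3 p0) *)
  | false, true, true, false => Hpoly k e d x1 x3 x2 x0 (b1 - b2) b1
  (* trapezoidal, black edge p3p0 (as square p0 p3 p2 p1) *)
  | true, false, false, true => Hpoly k e d x0 x2 x3 x1 (b1 - b2) b1
  | _, _, _, _ => 0
  end.

Definition vertex : Type := (bool * bool * bool)%type.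
Definition v000 : vertex := (false, false, false).
Definition v100 : vertex := (true, false, false).
Definition v010 : vertex := (false, true, false).
Definition v001 : vertex := (false, false, true).
Definition v110 : vertex := (true, true, false).
Definition v101 : vertex := (true, false, true).
Definition v011 : vertex := (false, true, true).
Definition v111 : vertex := (true, true, true).

(** For a <> 0 these 14
    colourings are exactly the colourings of the nine systems (a), (b), (c)
    together with their colour inversions and rotations:
    a = (1,1,1): system (a); a = e_i: system (b); a = e_i + e_j: system (c). *)
Definition colour (a : vertex) (b : bool) (n : vertex) : bool :=
  let '(a1, a2, a3) := a in
  let '(n1, n2, n3) := n in
  xorb b (xorb (andb a1 n1) (xorb (andb a2 n2) (andb a3 n3))).

Definition sq_eq (k : kind) (e d : CC) (col : vertex -> bool) (X : vertex -> CC)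
    (p0 p1 p2 p3 : vertex) (b1 b2 : CC) : Prop :=
  quadPoly k e d (col p0) (col p1) (col p2) (col p3)
    (unif k e d (col p0) (X p0)) (unif k e d (col p1) (X p1))
    (unif k e d (col p2) (X p2)) (unif k e d (col p3) (X p3)) b1 b2 = 0.

Definition six_tuple (k : kind) (e d : CC) (col : vertex -> bool) (X : vertex -> CC)
    (al1 al2 al3 : CC) : Prop :=
  sq_eq k e d col X v000 v100 v110 v010 al1 al2 /\
  sq_eq k e d col X v001 v101 v111 v011 al1 al2 /\
  sq_eq k e d col X v000 v010 v011 v001 al2 al3 /\
  sq_eq k e d col X v100 v110 v111 v101 al2 al3 /\
  sq_eq k e d col X v000 v100 v101 v001 al1 al3 /\
  sq_eq k e d col X v010 v110 v111 v011 al1 al3.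

(** The tetrahedron equations K(x,x12,x13,x23) = 0 and Kbar(x1,x2,x3,x123) = 0,
    written as squares (x, x12, x23, x13) and (x1, x2, x123, x3) whose
    diagonals carry the differences of the al_i; the overall sign s of the
    parameters fixes the orientation required by the (non-odd) H-equations. *)
Definition tetrahedron_eqs (k : kind) (e d : CC) (col : vertex -> bool)
    (X : vertex -> CC) (al1 al2 al3 : CC) : Prop :=
  let s := if Bool.eqb (col v100) (col v000) then Copp 1 else 1 in
  sq_eq k e d col X v000 v110 v011 v101 (s * (al1 - al2)) (s * (al1 - al3)) /\
  sq_eq k e d col X v100 v010 v111 v001 (s * (al1 - al2)) (s * (al1 - al3)).

Definition Lagrangian_relations (k : kind) (e d : CC)
    (L Lam Lamb : CC -> CC -> CC -> CC) : Prop :=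
  (forall X X' a, Lam X X' a = Lam X' X a) /\
  (forall Y Y' a, Lamb Y Y' a = Lamb Y' Y a) /\
  (forall a1 a2 X1 X2 X3 X4,
     Hpoly k e d (unif_black k e d X1) (unif_white k X2)
                 (unif_black k e d X3) (unif_white k X4) a1 a2 = 0 ->
     L X1 X2 a1 + L X3 X4 a1 - L X1 X4 a2 - L X3 X2 a2
       - Lam X1 X3 (a1 - a2) - Lamb X2 X4 (a1 - a2) = 0) /\
  (forall a1 a2 X1 X2 X3 X4,
     Hpoly k e d (unif_black k e d X1) (unif_white k X3)
                 (unif_black k e d X2) (unif_white k X4) (a2 - a1) a2 = 0 ->
     Lam X1 X2 a1 + Lamb X3 X4 a1 - L X1 X4 a2 - L X2 X3 a2
       + L X1 X3 (a2 - a1) + L X2 X4 (a2 - a1) = 0) /\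
  (forall a1 a2 X1 X2 X3 X4,
     Qpoly k e d (unif_black k e d X1) (unif_black k e d X2)
                 (unif_black k e d X3) (unif_black k e d X4) a1 a2 = 0 ->
     Lam X1 X2 a1 + Lam X3 X4 a1 - Lam X1 X4 a2 - Lam X3 X2 a2
       - Lam X1 X3 (a1 - a2) - Lam X2 X4 (a1 - a2) = 0) /\
  (forall a1 a2 Y1 Y2 Y3 Y4,
     Qpoly k 0 d (unif_white k Y1) (unif_white k Y2)
                 (unif_white k Y3) (unif_white k Y4) a1 a2 = 0 ->
     Lamb Y1 Y2 a1 + Lamb Y3 Y4 a1 - Lamb Y1 Y4 a2 - Lamb Y3 Y2 a2
       - Lamb Y1 Y3 (a1 - a2) - Lamb Y2 Y4 (a1 - a2) = 0).

(** * The discrete Lagrangian two-form on an oriented square with X (at n),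
    X1 (at n+e_i), X2 (at n+e_j), colours cX, cX1, cX2 (true = black). *)
Definition two_form (L Lam Lamb : CC -> CC -> CC -> CC) (cX cX1 cX2 : bool)
    (X X1 X2 a1 a2 : CC) : CC :=
  match cX, cX1, cX2 with
  | true, false, false => L X X1 a1 - L X X2 a2 - Lamb X1 X2 (a1 - a2)
  | false, true, true => L X1 X a1 - L X2 X a2 - Lam X1 X2 (a1 - a2)
  | true, false, true => L X X1 a1 - Lam X X2 a2 - L X2 X1 (a1 - a2)
  | false, true, false => L X1 X a1 - Lamb X X2 a2 - L X1 X2 (a1 - a2)
  | true, true, false => Lam X X1 a1 - L X X2 a2 + L X1 X2 (a2 - a1)
  | false, false, true => Lamb X X1 a1 - L X2 X a2 + L X2 X1 (a2 - a1)
  | true, true, true => Lam X X1 a1 - Lam X X2 a2 - Lam X1 X2 (a1 - a2)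
  | false, false, false => Lamb X X1 a1 - Lamb X X2 a2 - Lamb X1 X2 (a1 - a2)
  end.

Definition calL (L Lam Lamb : CC -> CC -> CC -> CC) (col : vertex -> bool)
    (X : vertex -> CC) (p q r : vertex) (a1 a2 : CC) : CC :=
  two_form L Lam Lamb (col p) (col q) (col r) (X p) (X q) (X r) a1 a2.

Definition closure_sum (L Lam Lamb : CC -> CC -> CC -> CC) (col : vertex -> bool)
    (X : vertex -> CC) (al1 al2 al3 : CC) : CC :=
  (calL L Lam Lamb col X v100 v110 v101 al2 al3 - calL L Lam Lamb col X v000 v010 v001 al2 al3)
  + (calL L Lam Lamb col X v010 v011 v110 al3 al1 - calL L Lam Lamb col X v000 v001 v100 al3 al1)
  + (calL L Lam Lamb col X v001 v101 v011 al1 al2 - calL L Lam Lamb col X v000 v100 v010 al1 al2).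

(** The closure sum only involves the values at x, x_i and x_ij: each shifted
    triangle form uses the vertices x_i, x_ij, x_ik and never x_123.  The
    argument therefore lives at the corner x.  Every quad-equation implies
    the Lagrangian relation prescribed for it, and, because H_k and Q_k are
    (anti)symmetric under the reflections of the square, also the relations
    obtained from the reflected squares.  For each of the fourteen admissible
    colourings the closure sum is a signed sum of such relations on the three
    faces through x and on the tetrahedron equation K(x,x12,x13,x23); this
    finite linear algebra is discharged by collecting the relations and
    solving the real and imaginary parts by linear arithmetic. *)
From Pilot Require Import Defs.
From Stdlib Require Import Reals Lra.
Local Open Scope C_scope.

Lemma CC_ext (z w : CC) : Re z = Re w -> Im z = Im w -> z = w.
Proof. destruct z, w; simpl; intros -> ->; reflexivity. Qed.

Lemma CC_ring : ring_theory Defs.C0 Defs.C1 Cadd Cmul Csub Copp (@eq CC).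
Proof.
  split; intros; apply CC_ext; destruct_all CC;
    unfold Csub, Cadd, Cmul, Copp, Defs.C0, Defs.C1, Cr; simpl; ring.
Qed.
Add Ring CC_ring : CC_ring.

Lemma Csinh_opp (z : CC) : Csinh (- z) = - Csinh z.
Proof.
  unfold Csinh; replace (- - z) with z by ring.
  generalize (Cexp z) (Cexp (- z)); intros u v; ring.
Qed.

Lemma Hpoly_flip (k : kind) (e d x1 x2 x3 x4 a1 a2 : CC) :
  Hpoly k e d x1 x4 x3 x2 a2 a1 = - Hpoly k e d x1 x2 x3 x4 a1 a2.
Proof.
  destruct k; simpl; [ring | ring |].
  replace (a2 + a1) with (a1 + a2) by ring; ring.
Qed.

Lemma Qpoly_flip (k : kind) (e d x1 x2 x3 x4 a1 a2 : CC) :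
  Qpoly k e d x1 x4 x3 x2 a2 a1 = - Qpoly k e d x1 x2 x3 x4 a1 a2.
Proof.
  destruct k; simpl; [ring | ring |].
  replace (2 * (a2 - a1)) with (- (2 * (a1 - a2))) by ring; rewrite Csinh_opp; ring.
Qed.

(** Q_k is a tetrahedral equation: exchanging x3 and x4 (so that x1x3 becomes
    an edge with parameter a1 - a2) leaves it invariant. *)
Lemma Qpoly_diag (k : kind) (e d x1 x2 x3 x4 a1 a2 : CC) :
  Qpoly k e d x1 x2 x4 x3 a1 (a1 - a2) = Qpoly k e d x1 x2 x3 x4 a1 a2.
Proof.
  destruct k; simpl; [ring | ring |].
  replace (a1 - (a1 - a2)) with a2 by ring; ring.
Qed.

Lemma Hpoly_flip_eq0 (k : kind) (e d x1 x2 x3 x4 a1 a2 : CC) :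
  Hpoly k e d x1 x2 x3 x4 a1 a2 = 0 -> Hpoly k e d x1 x4 x3 x2 a2 a1 = 0.
Proof. intros H; rewrite Hpoly_flip, H; ring. Qed.

Lemma Qpoly_flip_eq0 (k : kind) (e d x1 x2 x3 x4 a1 a2 : CC) :
  Qpoly k e d x1 x2 x3 x4 a1 a2 = 0 -> Qpoly k e d x1 x4 x3 x2 a2 a1 = 0.
Proof. intros H; rewrite Qpoly_flip, H; ring. Qed.

Lemma Qpoly_diag_eq0 (k : kind) (e d x1 x2 x3 x4 a1 a2 : CC) :
  Qpoly k e d x1 x2 x3 x4 a1 a2 = 0 -> Qpoly k e d x1 x2 x4 x3 a1 (a1 - a2) = 0.
Proof. intros H; rewrite Qpoly_diag; exact H. Qed.

Section LagrangianRelations.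
Variables (k : kind) (e d : CC) (L Lam Lamb : CC -> CC -> CC -> CC).
Hypothesis HL : Lagrangian_relations k e d L Lam Lamb.

Lemma rhombic_relation (X1 X2 X3 X4 a1 a2 : CC) :
  Hpoly k e d (unif_black k e d X1) (unif_white k X2)
              (unif_black k e d X3) (unif_white k X4) a1 a2 = 0 ->
  L X1 X2 a1 + L X3 X4 a1 - L X1 X4 a2 - L X3 X2 a2
    - Lam X1 X3 (a1 - a2) - Lamb X2 X4 (a1 - a2) = 0.
Proof. apply HL. Qed.

(** The same H-equation read as a trapezoidal square: its black diagonal
    becomes the black edge with parameter q - p. *)
Lemma trapezoidal_relation (X1 X2 X3 X4 p q : CC) :
  Hpoly k e d (unif_black k e d X1) (unif_white k X3)
              (unif_black k e d X2) (unif_white k X4) p q = 0 ->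
  Lam X1 X2 (q - p) + Lamb X3 X4 (q - p) - L X1 X4 q - L X2 X3 q
    + L X1 X3 p + L X2 X4 p = 0.
Proof.
  intros H; replace p with (q - (q - p)) in H at 1 by ring.
  apply HL in H; replace (q - (q - p)) with p in H by ring; exact H.
Qed.

Lemma black_Q_relation (X1 X2 X3 X4 a1 a2 : CC) :
  Qpoly k e d (unif_black k e d X1) (unif_black k e d X2)
              (unif_black k e d X3) (unif_black k e d X4) a1 a2 = 0 ->
  Lam X1 X2 a1 + Lam X3 X4 a1 - Lam X1 X4 a2 - Lam X3 X2 a2
    - Lam X1 X3 (a1 - a2) - Lam X2 X4 (a1 - a2) = 0.
Proof. apply HL. Qed.

Lemma white_Q_relation (Y1 Y2 Y3 Y4 a1 a2 : CC) :
  Qpoly k 0 d (unif_white k Y1) (unif_white k Y2)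
              (unif_white k Y3) (unif_white k Y4) a1 a2 = 0 ->
  Lamb Y1 Y2 a1 + Lamb Y3 Y4 a1 - Lamb Y1 Y4 a2 - Lamb Y3 Y2 a2
    - Lamb Y1 Y3 (a1 - a2) - Lamb Y2 Y4 (a1 - a2) = 0.
Proof. apply HL. Qed.

End LagrangianRelations.

Definition K_eq (k : kind) (e d : CC) (col : vertex -> bool) (X : vertex -> CC)
    (al1 al2 al3 : CC) : Prop :=
  let s := if Bool.eqb (col v100) (col v000) then Copp 1 else 1 in
  sq_eq k e d col X v000 v110 v011 v101 (s * (al1 - al2)) (s * (al1 - al3)).

Lemma tetrahedron_K (k : kind) (e d : CC) (col : vertex -> bool)
    (X : vertex -> CC) (al1 al2 al3 : CC) :
  tetrahedron_eqs k e d col X al1 al2 al3 -> K_eq k e d col X al1 al2 al3.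
Proof. intros [HK _]; exact HK. Qed.

(** Replace every H- or Q-equation in the context by the Lagrangian relations
    of the square and of its reflections (for Q, the whole orbit of six
    labellings fixing x1 under [Qpoly_flip] and [Qpoly_diag]). *)
Ltac derive_relations k e d L Lam Lamb HL :=
  repeat match goal with
  | H : Hpoly _ _ _ _ _ _ _ _ _ = _ |- _ =>
      let H' := fresh in pose proof (Hpoly_flip_eq0 _ _ _ _ _ _ _ _ _ H) as H';
      pose proof (rhombic_relation k e d L Lam Lamb HL _ _ _ _ _ _ H);
      pose proof (trapezoidal_relation k e d L Lam Lamb HL _ _ _ _ _ _ H);
      pose proof (rhombic_relation k e d L Lam Lamb HL _ _ _ _ _ _ H');
      pose proof (trapezoidal_relation k e d L Lam Lamb HL _ _ _ _ _ _ H');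
      clear H H'
  | H : Qpoly _ _ _ _ _ _ _ _ _ = _ |- _ =>
      let H1 := fresh in let H2 := fresh in let H3 := fresh in
      let H4 := fresh in let H5 := fresh in
      pose proof (Qpoly_flip_eq0 _ _ _ _ _ _ _ _ _ H) as H1;
      pose proof (Qpoly_diag_eq0 _ _ _ _ _ _ _ _ _ H) as H2;
      pose proof (Qpoly_diag_eq0 _ _ _ _ _ _ _ _ _ H1) as H3;
      pose proof (Qpoly_flip_eq0 _ _ _ _ _ _ _ _ _ H2) as H4;
      pose proof (Qpoly_diag_eq0 _ _ _ _ _ _ _ _ _ H4) as H5;
      let use h := first [ pose proof (black_Q_relation k e d L Lam Lamb HL _ _ _ _ _ _ h)
                         | pose proof (white_Q_relation k e d L Lam Lamb HL _ _ _ _ _ _ h) ];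
                   clear h in
      use H; use H1; use H2; use H3; use H4; use H5
  end.

Ltac is_canonical p a1 a2 a3 :=
  first [ constr_eq p a1 | constr_eq p a2 | constr_eq p a3
        | constr_eq p (a1 - a2) | constr_eq p (a2 - a1) | constr_eq p (a1 - a3)
        | constr_eq p (a3 - a1) | constr_eq p (a2 - a3) | constr_eq p (a3 - a2)
        | constr_eq p (- a1) | constr_eq p (- a2) | constr_eq p (- a3) ].

(** Rewrite the parameter of every value of the Lagrangian [F] in the context
    into its canonical form, so that equal values are syntactically equal. *)
Ltac normalize_params F a1 a2 a3 :=
  repeat match goal with
  | H : context [F ?x ?y ?p] |- _ =>
      tryif is_canonical p a1 a2 a3 then fail else
      first [ replace p with a1 in H by ring | replace p with a2 in H by ring
            | replace p with a3 in H by ring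
            | replace p with (a1 - a2) in H by ring | replace p with (a2 - a1) in H by ring
            | replace p with (a1 - a3) in H by ring | replace p with (a3 - a1) in H by ring
            | replace p with (a2 - a3) in H by ring | replace p with (a3 - a2) in H by ring
            | replace p with (- a1) in H by ring | replace p with (- a2) in H by ring
            | replace p with (- a3) in H by ring ]
  end.

Ltac add_symmetry F HF :=
  repeat match goal with
  | |- context [F ?x ?y ?c] =>
      assert_fails (assert (F x y c = F y x c) by assumption);
      assert_fails (assert (F y x c = F x y c) by assumption);
      assert (F x y c = F y x c) by apply HF
  | H : context [F ?x ?y ?c] |- _ =>
      assert_fails (assert (F x y c = F y x c) by assumption);
      assert_fails (assert (F y x c = F x y c) by assumption);
      assert (F x y c = F y x c) by apply HF
  end.

Lemma Re_Cadd (z w : CC) : Re (z + w) = (Re z + Re w)%R. Proof. reflexivity. Qed.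
Lemma Im_Cadd (z w : CC) : Im (z + w) = (Im z + Im w)%R. Proof. reflexivity. Qed.
Lemma Re_Copp (z : CC) : Re (- z) = (- Re z)%R. Proof. reflexivity. Qed.
Lemma Im_Copp (z : CC) : Im (- z) = (- Im z)%R. Proof. reflexivity. Qed.
Lemma Re_Csub (z w : CC) : Re (z - w) = (Re z - Re w)%R. Proof. reflexivity. Qed.
Lemma Im_Csub (z w : CC) : Im (z - w) = (Im z - Im w)%R. Proof. reflexivity. Qed.
Lemma Re_C0 : Re 0 = 0%R. Proof. reflexivity. Qed.
Lemma Im_C0 : Im 0 = 0%R. Proof. reflexivity. Qed.
Hint Rewrite Re_Cadd Im_Cadd Re_Copp Im_Copp Re_Csub Im_Csub Re_C0 Im_C0 : cparts.

Ltac project_to_reals :=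
  repeat match goal with
  | H : @eq CC _ _ |- _ =>
      let HRe := fresh in let HIm := fresh in
      pose proof (f_equal Re H) as HRe; pose proof (f_equal Im H) as HIm; clear H
  end;
  apply CC_ext;
  autorewrite with cparts in *.

(** In each of the fourteen cases the closure sum is a signed sum
    of Lagrangian relations of these four squares and their reflections. *)
Lemma corner_closure (k : kind) (e d : CC) (L Lam Lamb : CC -> CC -> CC -> CC)
    (HL : Lagrangian_relations k e d L Lam Lamb)
    (a : vertex) (b : bool) (al1 al2 al3 : CC) (X : vertex -> CC) :
  a <> v000 ->
  sq_eq k e d (colour a b) X v000 v100 v110 v010 al1 al2 ->
  sq_eq k e d (colour a b) X v000 v010 v011 v001 al2 al3 ->
  sq_eq k e d (colour a b) X v000 v100 v101 v001 al1 al3 ->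
  K_eq k e d (colour a b) X al1 al2 al3 ->
  closure_sum L Lam Lamb (colour a b) X al1 al2 al3 = 0.
Proof.
  intros Ha F12 F23 F13 K.
  pose proof HL as [HLam [HLamb _]].
  destruct a as [[[|] [|]] [|]], b; try (exfalso; apply Ha; reflexivity); clear Ha;
  cbv [K_eq sq_eq quadPoly colour unif v000 v100 v010 v001 v110 v101 v011 v111 xorb andb
       Bool.eqb closure_sum calL two_form] in *;
  derive_relations k e d L Lam Lamb HL;
  normalize_params L al1 al2 al3; normalize_params Lam al1 al2 al3;
  normalize_params Lamb al1 al2 al3;
  add_symmetry Lam HLam; add_symmetry Lamb HLamb;
  clear HL HLam HLamb;
  project_to_reals; lra.
Qed.

Theorem theorem5p2 (k : kind) (eps delta : CC)
  (a : vertex) (b : bool) (Ha : a <> v000)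
  (L Lam Lamb : CC -> CC -> CC -> CC)
  (HL : Lagrangian_relations k eps delta L Lam Lamb)
  (al1 al2 al3 : CC) (X : vertex -> CC)
  (Hsix : six_tuple k eps delta (colour a b) X al1 al2 al3)
  (Htet : tetrahedron_eqs k eps delta (colour a b) X al1 al2 al3) :
  closure_sum L Lam Lamb (colour a b) X al1 al2 al3 = 0.
Proof.
  destruct Hsix as (F12 & _ & F23 & _ & F13 & _).
  exact (corner_closure k eps delta L Lam Lamb HL a b al1 al2 al3 X
           Ha F12 F23 F13 (tetrahedron_K _ _ _ _ _ _ _ _ Htet)).
Qed.
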